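(* Let $\vec G=(G,\alpha,w)$ be a finite magnetic graph with vertex set $V$, and let $V_1\subseteq V_0\subseteq V$, $a\in\mathbb{N}$. Then the spectrum of the $a$-th frame member of $\vec G^+_{V_1}$ identified along $V_0$ satisfies $$\operatorname{spec}\big(F_a(\vec G^+_{V_1},V_0)\big)=\operatorname{spec}\big(\vec G^+_{V_1}\big)\uplus\operatorname{spec}\big(\vec G^+_{V_0}\big)^{(a-1)}.$$
   Context: A graph $G=(V,E,\partial)$: finite disjoint sets $V,E$, incidence $\partial e=(\partial_-e,\partial_+e)\in V\times V$, inversion $e\mapsto \bar e$ with $\bar{\bar e}=e$, $\bar e\ne e$, $\partial_\pm\bar e=\partial_\mp e$; loops and multiple edges allowed; $E_v=\{e:\partial_-e=v\}$, $\deg v=|E_v|>0$. A magnetic graph $\vec G=(G,\alpha,w)$ has weights $w:E\to(0,\infty)$ with $w_{\bar e}=w_e$ and magnetic potential $\alpha:E\to\mathbb{R}/2\pi\mathbb{Z}$ with $\alpha_{\bar e}=-\alpha_e$; $\deg^w v=\sum_{e\in E_v}w_e$. The magnetic Laplacian on $\ell^2(V,\deg^w)$ (inner product $\langle f,g\rangle=\sum_v f(v)\overline{g(v)}\deg^w v$) is $(\Delta f)(v)=f(v)-\frac1{\deg^w v}\sum_{e\in E_v}w_e e^{i\alpha_e}f(\partial_+e)$. For $W\subseteq V$, the Dirichlet Laplacian is $\Delta^+_W=\iota_W^*\Delta\iota_W$ where $\iota_W:\ell^2(V\setminus W,\deg^w)\to\ell^2(V,\deg^w)$ extends by $0$; $\vec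 G^+_W$ denotes $\vec G$ with the vertices $W$ virtualised, and $\operatorname{spec}(\vec G^+_W)$ is the multiset of eigenvalues of $\Delta^+_W$ (with multiplicity); $\operatorname{spec}(\vec G)=\operatorname{spec}(\vec G^+_\emptyset)$. Frame member: $G^a$ is the disjoint union of $a$ copies $G\times\{j\}$, $j=1,\dots,a$; with $(v,i)\sim(v',j)$ iff $(v,i)=(v',j)$ or ($v=v'\in V_0$), $F_a(G,V_0)=G^a/\!\sim$ (vertices are classes, edges unchanged, incidence $e\mapsto([\partial_-e],[\partial_+e])$), and $F_a(\vec G,V_0)$ carries $w_{(e,j)}=w_e$, $\alpha_{(e,j)}=\alpha_e$. $F_a(\vec G^+_{V_1},V_0)$ is $F_a(\vec G,V_0)$ with the vertices $[(v_1,j)]$, $v_1\in V_1$, virtualised, i.e. its spectrum is that of the Dirichlet Laplacian of $F_a(\vec G,V_0)$ on these vertices. Multisets: $\uplus$ adds multiplicities; $M^{(k)}$ multiplies multiplicities by $k$ ($M^{(0)}$ is empty). *)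

From HB Require Import structures.
From mathcomp Require Import all_boot all_order all_algebra.
From mathcomp Require Import complex.
From mathcomp Require Import all_classical all_reals all_analysis.
Set Implicit Arguments. Unset Strict Implicit. Unset Printing Implicit Defensive.
Import Order.TTheory GRing.Theory Num.Theory.
Local Open Scope ring_scope.

Definition is_graph (V E : finType) (src tgt : E -> V) (inv : E -> E) : Prop :=
  [/\ forall e, inv (inv e) = e, forall e, inv e != e,
      forall e, src (inv e) = tgt e, forall e, tgt (inv e) = src e
    & forall v : V, exists e, src e = v ].

(* A magnetic graph: weights and magnetic potential alpha : E -> R/2piZ,
   represented by real representatives; alpha_{inv e} = - alpha_e mod 2 pi. *)
Definition is_magnetic (R : realType) (V E : finType) (src tgt : E -> V)
  (inv : E -> E) (w : E -> R) (alpha : E -> R) : Prop :=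
  [/\ is_graph src tgt inv, forall e, 0 < w e, forall e, w (inv e) = w e
    & forall e, exists k : int, alpha (inv e) = - alpha e + 2 * pi * k%:~R].

Definition expi (R : realType) (t : R) : R[i] := (cos t +i* sin t)%C.

Definition degw (R : realType) (V E : finType) (src : E -> V) (w : E -> R) (v : V) : R :=
  \sum_(e | src e == v) w e.

(* Matrix entry (u,v) of the magnetic Laplacian
   (Delta f)(u) = f(u) - 1/deg^w u * sum_{e in E_u} w_e e^{i alpha_e} f(tgt e). *)
Definition lap_entry (R : realType) (V E : finType) (src tgt : E -> V)
  (w : E -> R) (alpha : E -> R) (u v : V) : R[i] :=
  (u == v)%:R - ((degw src w u)^-1)%:C%C *
     \sum_(e | (src e == u) && (tgt e == v)) (w e)%:C%C * expi (alpha e).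

(* Dirichlet Laplacian Delta^+_W = iota_W^* Delta iota_W as a matrix, indexed by
   an enumeration of V \ W (iota_W^* is the restriction since both spaces carry
   the weight deg^w). *)
Definition dir_lap (R : realType) (V E : finType) (src tgt : E -> V)
  (w : E -> R) (alpha : E -> R) (W : {set V}) : 'M[R[i]]_#|~: W| :=
  \matrix_(i, j) lap_entry src tgt w alpha (enum_val i) (enum_val j).

(* multiplicity of lambda in spec(G^+_W): dimension of the eigenspace
   (the operator is self-adjoint, so this is also the algebraic multiplicity). *)
Definition spec_mult (R : realType) (V E : finType) (src tgt : E -> V)
  (w : E -> R) (alpha : E -> R) (W : {set V}) (lambda : R[i]) : nat :=
  \rank (eigenspace (dir_lap src tgt w alpha W) lambda).

Section Frame.
Variables (V E : finType) (a : nat) (V0 : {set V}).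

Definition fcls (x : V * 'I_a) : {set V * 'I_a} :=
  if x.1 \in V0 then [set y | y.1 == x.1] else [set x].

Definition fvert_pred (A : {set V * 'I_a}) : bool := [exists x, A == fcls x].

(* vertices of F_a(G,V0): the equivalence classes *)
Definition fvert : finType := {A : {set V * 'I_a} | fvert_pred A}.

Definition fv (x : V * 'I_a) : fvert :=
  exist fvert_pred (fcls x) (introT existsP (ex_intro (fun y => fcls x == fcls y) x (eqxx _))).

Definition fsrc (src : E -> V) (ej : E * 'I_a) : fvert := fv (src ej.1, ej.2).
Definition ftgt (tgt : E -> V) (ej : E * 'I_a) : fvert := fv (tgt ej.1, ej.2).
Definition flift (R : Type) (f : E -> R) (ej : E * 'I_a) : R := f ej.1.

Definition fW (V1 : {set V}) : {set fvert} :=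
  [set x | [exists v1 in V1, exists j, x == fv (v1, j)]].
End Frame.
Arguments fsrc {V E} a V0 src ej.
Arguments ftgt {V E} a V0 tgt ej.
Arguments flift {E} a {R} f ej.

From HB Require Import structures.
From mathcomp Require Import all_boot all_order all_algebra.
From mathcomp Require Import complex.
From mathcomp Require Import all_classical all_reals all_analysis.
From mathcomp Require Import ring.
Set Implicit Arguments. Unset Strict Implicit. Unset Printing Implicit Defensive.
Import Order.TTheory GRing.Theory Num.Theory.
Local Open Scope ring_scope.

(* Functions on the non-virtual vertices of the frame split into lifts of
   functions on G^+_{V1} (constant along each class) and, for each of the first
   a - 1 copies, differences "copy k minus last copy" of functions on G^+_{V0}.
   The frame Laplacian maps each of these a pieces to itself, acting there as
   the Laplacian of G^+_{V1}, resp. G^+_{V0}.  The pieces span all functions and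
   their dimensions add up to at most the number of vertices, so the sum is
   direct and every eigenspace of the frame splits accordingly. *)

Lemma big_option (R : Type) (idx : R) (op : Monoid.com_law idx) (I : finType)
    (F : option I -> R) :
  \big[op/idx]_o F o = op (F None) (\big[op/idx]_i F (Some i)).
Proof.
rewrite (bigD1 None) //=; congr (op _ _).
rewrite (reindex_omap Some idfun) //=; last by case.
by apply: eq_bigl => i; rewrite eqxx.
Qed.

Lemma mxdirect_sumsS (F : fieldType) (I : finType) n (A B : I -> 'M[F]_n) :
  mxdirect (\sum_i A i) -> (forall i, B i <= A i)%MS -> mxdirect (\sum_i B i).
Proof.
move=> /mxdirect_sumsP dirA sBA; apply/mxdirect_sumsP => i _.
apply/eqP; rewrite -submx0.
have := capmxS (sBA i) (sumsmxS (P := fun j => true && (j != i)) (fun j _ => sBA j)).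
by rewrite dirA.
Qed.

Lemma mxrank_ker_tr (F : fieldType) n (A : 'M[F]_n) : \rank (kermx A^T) = \rank (kermx A).
Proof. by rewrite !mxrank_ker mxrank_tr. Qed.

Lemma intertwine_shift (F : fieldType) m n (E : 'M[F]_(m, n)) T A (lambda : F) :
  E *m T = A *m E -> E *m (T - lambda%:M) = (A - lambda%:M) *m E.
Proof.
by move=> ET; rewrite mulmxBr mulmxBl ET mul_mx_scalar mul_scalar_mx.
Qed.

Section Intertwined.
Variables (F : fieldType) (I : finType) (n : nat) (m : I -> nat).
Variables (T : 'M[F]_n) (E : forall i, 'M[F]_(m i, n)) (A : forall i, 'M[F]_(m i)).
Hypothesis E_T : forall i, E i *m T = A i *m E i.
Hypothesis E_span : (1%:M <= \sum_i <<E i>>)%MS.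
Hypothesis E_size : (\sum_i m i <= n)%N.

Let S := (\sum_i <<E i>>)%MS.

Let rank_S : \rank S = n.
Proof. by apply/eqP; rewrite eqn_leq rank_leq_col -{1}(mxrank1 F n) mxrankS. Qed.

Let sum_rank_E : (\sum_i \rank (E i) = n)%N /\ (\sum_i m i = n)%N.
Proof.
have le_rank_m : (\sum_i \rank (E i) <= \sum_i m i)%N.
  by apply: leq_sum => i _; exact: rank_leq_row.
have le_n_rank : (n <= \sum_i \rank (E i))%N.
  rewrite -{1}rank_S (eq_bigr (fun i => \rank <<E i>>)) => [|i _]; last by rewrite genmxE.
  by have [] : (\rank S <= \sum_i \rank <<E i>> ?= iff mxdirect S)%N :=
    mxrank_sum_leqif _.
split; apply/eqP; rewrite eqn_leq.
  by rewrite le_n_rank (leq_trans le_rank_m E_size).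
by rewrite E_size (leq_trans le_n_rank le_rank_m).
Qed.

Lemma intertwined_size : (\sum_i m i)%N = n.
Proof. by case: sum_rank_E. Qed.

Let S_direct : mxdirect S.
Proof.
apply/mxdirectP; rewrite /= rank_S -{1}(proj1 sum_rank_E).
by apply: eq_bigr => i _; rewrite genmxE.
Qed.

Let E_row_free i : row_free (E i).
Proof.
have [sumE summ] := sum_rank_E.
have : (\sum_j (m j - \rank (E j)) == 0)%N.
  by rewrite sumnB => [|j _]; [rewrite sumE summ subnn | exact: rank_leq_row].
rewrite sum_nat_eq0 => /forallP/(_ i)/=.
by rewrite subn_eq0 /row_free eqn_leq rank_leq_row.
Qed.

Lemma mxrank_intertwined : \rank T = (\sum_i \rank (A i))%N.
Proof.
have ST : (S *m T :=: T)%MS.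
  apply/eqmxP; rewrite submxMl /= -[X in (X <= _)%MS]mul1mx.
  by apply: submxMr.
have ET i : (<<E i>> *m T <= <<E i>>)%MS.
  by rewrite (eqmxMr T (genmxE (E i))) E_T genmxE submxMl.
rewrite -ST sumsmxMr.
have /mxdirectP/= -> := mxdirect_sumsS S_direct ET.
apply: eq_bigr => i _.
by rewrite (eqmxMr T (genmxE (E i))) E_T mxrankMfree.
Qed.

Lemma mxrank_ker_intertwined :
  \rank (kermx T) = (\sum_i \rank (kermx (A i)))%N.
Proof.
rewrite mxrank_ker mxrank_intertwined -{1}intertwined_size -sumnB.
  by apply: eq_bigr => i _; rewrite mxrank_ker.
by move=> i _; exact: rank_leq_row.
Qed.
End Intertwined.

Lemma sum_mul_delta (C : pzSemiRingType) (I : finType) (A : {pred I})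
    (F : I -> C) (u : I) :
  \sum_(v in A) F v * (u == v)%:R = (u \in A)%:R * F u.
Proof.
case: (boolP (u \in A)) => uA; last first.
  rewrite mul0r big1 // => v vA.
  by have /negbTE := memPn uA v vA; rewrite eq_sym => ->; rewrite mulr0.
rewrite mul1r (bigD1 u) //= eqxx mulr1 big1 ?addr0 // => v /andP[_].
by rewrite eq_sym => /negbTE ->; rewrite mulr0.
Qed.

Lemma sumr_indicator {C : pzSemiRingType} (I : finType) (x : I) :
  \sum_i (i == x)%:R = 1 :> C.
Proof. by rewrite (bigD1 x) //= eqxx big1 ?addr0 // => i /negbTE ->. Qed.

Section SetMatrix.
Variable C : pzSemiRingType.

Definition setmx (U1 U2 : finType) (W1 : {set U1}) (W2 : {set U2})
    (K : U1 -> U2 -> C) : 'M[C]_(#|~: W1|, #|~: W2|) :=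
  \matrix_(i, j) K (enum_val i) (enum_val j).

Definition rowfun (U : finType) (W : {set U}) (h : U -> C) : 'rV[C]_#|~: W| :=
  \row_j h (enum_val j).

Variables (U1 U2 U3 : finType) (W1 : {set U1}) (W2 : {set U2}) (W3 : {set U3}).

Lemma eq_setmx (K L : U1 -> U2 -> C) :
  (forall x y, x \in ~: W1 -> y \in ~: W2 -> K x y = L x y) ->
  setmx W1 W2 K = setmx W1 W2 L.
Proof. by move=> eqKL; apply/matrixP => i j; rewrite !mxE eqKL ?enum_valP. Qed.

Lemma trmx_setmx (K : U1 -> U2 -> C) :
  (setmx W1 W2 K)^T = setmx W2 W1 (fun y x => K x y).
Proof. by apply/matrixP => i j; rewrite !mxE. Qed.

Lemma mulmx_setmx (K : U1 -> U2 -> C) (L : U2 -> U3 -> C) :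
  setmx W1 W2 K *m setmx W2 W3 L =
  setmx W1 W3 (fun x z => \sum_(y in ~: W2) K x y * L y z).
Proof.
apply/matrixP => i j; rewrite !mxE [RHS]big_enum_val.
by apply: eq_bigr => k _; rewrite !mxE.
Qed.

Lemma delta_rowfun (j : 'I_#|~: W2|) :
  delta_mx 0 j = rowfun W2 (fun y => (y == enum_val j)%:R).
Proof. by apply/rowP => k; rewrite !mxE eqxx (inj_eq enum_val_inj). Qed.

End SetMatrix.

Lemma rowfun_sub_setmx (F : fieldType) (U1 U2 : finType) (W1 : {set U1})
    (W2 : {set U2}) (K : U1 -> U2 -> F) x :
  x \in ~: W1 -> (rowfun W2 (K x) <= setmx W1 W2 K)%MS.
Proof.
move=> xW; rewrite -(enum_rankK_in xW xW); set i := enum_rank_in _ _.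
have -> : rowfun W2 (K (enum_val i)) = row i (setmx W1 W2 K).
  by apply/rowP => j; rewrite !mxE.
exact: row_sub.
Qed.

Lemma dir_lap_setmx (R : realType) (V E : finType) (src tgt : E -> V)
    (w alpha : E -> R) (W : {set V}) :
  dir_lap src tgt w alpha W = setmx W W (lap_entry src tgt w alpha).
Proof. by []. Qed.

Section Laplacian.
Variables (R : realType) (V E : finType) (src tgt : E -> V) (w alpha : E -> R).

Definition lap_act (f : V -> R[i]) (u : V) : R[i] :=
  f u - ((degw src w u)^-1)%:C%C *
          \sum_(e | src e == u) (w e)%:C%C * expi (alpha e) * f (tgt e).

Lemma sum_lap_entry (W : {set V}) (f : V -> R[i]) u :
  (forall y, y \in W -> f y = 0) ->
  \sum_(y in ~: W) lap_entry src tgt w alpha u y * f y = lap_act f u.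
Proof.
move=> fW0; transitivity (\sum_y lap_entry src tgt w alpha u y * f y).
  rewrite [RHS](bigID (mem W)) /= [X in _ = X + _]big1 ?add0r.
    by apply: eq_bigl => y; rewrite inE.
  by move=> y yW; rewrite fW0 ?mulr0.
rewrite /lap_entry; under eq_bigr do rewrite mulrBl.
rewrite sumrB; congr (_ - _).
  rewrite (bigD1 u) //= eqxx mul1r big1 ?addr0 // => y /negbTE.
  by rewrite eq_sym => ->; rewrite mul0r.
under eq_bigr do rewrite -mulrA.
rewrite -mulr_sumr; congr (_ * _).
under eq_bigr do rewrite mulr_suml.
rewrite (exchange_big_dep (fun e => src e == u)) /=; last by move=> y e _ /andP[].
apply: eq_bigr => e srce.
by rewrite (big_pred1 (tgt e)) // => y /=; rewrite srce eq_sym.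
Qed.

Lemma lap_act_delta u v :
  lap_act (fun y => (y == v)%:R) u = lap_entry src tgt w alpha u v.
Proof.
rewrite /lap_act /lap_entry big_mkcondr /=; congr (_ - _ * _).
by apply: eq_bigr => e _; case: eqP; rewrite ?mulr1 ?mulr0.
Qed.

End Laplacian.

Arguments sum_lap_entry {R V E src tgt w alpha W f u}.

Section FrameVertices.
Variables (V E : finType) (a : nat) (V0 : {set V}).

Lemma mem_fcls (x : V * 'I_a) : x \in fcls V0 x.
Proof. by rewrite /fcls; case: ifP => _; rewrite !inE. Qed.

Lemma fv_eq (x y : V * 'I_a) :
  (fv V0 x == fv V0 y) = (x.1 == y.1) && ((x.1 \in V0) || (x.2 == y.2)).
Proof.
rewrite -val_eqE /=; apply/eqP/andP => [eq_xy | [/eqP eq1 eq2]].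
  have := mem_fcls x; rewrite eq_xy /fcls.
  case: ifP => yV0; rewrite !inE => /eqP ->; first by rewrite eqxx yV0.
  by rewrite !eqxx orbT.
case: x y eq1 eq2 => [x1 x2] [y1 y2] /= <- /orP[xV0 | /eqP <- //].
by rewrite /fcls /= xV0.
Qed.

Lemma fvP (X : fvert a V0) : exists x, X = fv V0 x.
Proof. by case: X => A /[dup] /existsP[x /eqP ->] ?; exists x; apply: val_inj. Qed.

Lemma mem_fW (V1 : {set V}) (u : V) (j : 'I_a) :
  (fv V0 (u, j) \in fW a V0 V1) = (u \in V1).
Proof.
rewrite inE; apply/existsP/idP => [[v /andP[vV1 /existsP[k]]] | uV1].
  by rewrite fv_eq /= => /andP[/eqP -> _].
by exists u; rewrite uV1; apply/existsP; exists j.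
Qed.

Lemma fsrc_sum (M : zmodType) (src : E -> V) (Phi : E * 'I_a -> M) u j :
  \sum_(ej | fsrc a V0 src ej == fv V0 (u, j)) Phi ej =
  \sum_(e | src e == u) (if u \in V0 then \sum_k Phi (e, k) else Phi (e, j)).
Proof.
symmetry; transitivity (\sum_(e | src e == u) \sum_(k | (u \in V0) || (k == j)) Phi (e, k)).
  apply: eq_bigr => e _; case: ifP => uV0 /=; first exact: eq_bigl.
  by rewrite (big_pred1 j).
rewrite pair_big_dep; apply: eq_big => [[e k]|[e k] _] //=.
by rewrite /fsrc fv_eq /=; case: eqP => // ->.
Qed.

Lemma degw_fv (R : realType) (src : E -> V) (w : E -> R) u j :
  degw (fsrc a V0 src) (flift a w) (fv V0 (u, j)) =
  (if u \in V0 then a%:R else 1) * degw src w u.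
Proof.
rewrite /degw fsrc_sum /flift /=; case: ifP => _; last by rewrite mul1r.
rewrite mulr_sumr; apply: eq_bigr => e _.
by rewrite sumr_const card_ord mulr_natl.
Qed.

End FrameVertices.

Section FrameLaplacian.
Variables (R : realType) (V E : finType) (src tgt : E -> V) (w alpha : E -> R).
Variables (V0 : {set V}) (a' : nat).
Local Notation a := a'.+1.
Local Notation FV := (fvert a V0).
Local Notation lap := (lap_act src tgt w alpha).
Local Notation lapF := (lap_act (fsrc a V0 src) (ftgt a V0 tgt) (flift a w) (flift a alpha)).

Lemma lap_act_lift (f : V -> R[i]) (h : FV -> R[i]) :
  (forall t l, h (fv V0 (t, l)) = f t) ->
  forall u j, lapF h (fv V0 (u, j)) = lap f u.
Proof.
move=> hf u j; rewrite /lap_act fsrc_sum degw_fv /ftgt /flift /= hf.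
case: ifP => _; last first.
  by rewrite mul1r; under eq_bigr do rewrite hf.
under eq_bigr do under eq_bigr do rewrite hf.
under eq_bigr do rewrite sumr_const card_ord.
rewrite sumrMnl invfM rmorphM /= fmorphV rmorph_nat -mulrA.
set s := \sum_(e | _) _; rewrite -(mulr_natl s) mulrCA mulKf // pnatr_eq0.
Qed.

Lemma lap_act_copy (f : V -> R[i]) (c : 'I_a -> R[i]) (h : FV -> R[i]) :
  (forall t, t \in V0 -> f t = 0) -> \sum_l c l = 0 ->
  (forall t l, h (fv V0 (t, l)) = f t * c l) ->
  forall u j, lapF h (fv V0 (u, j)) = (u \notin V0)%:R * lap f u * c j.
Proof.
move=> fV0 c0 hfc u j; rewrite /lap_act fsrc_sum degw_fv /ftgt /flift /= hfc.
case: ifP => uV0 /=.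
  rewrite fV0 // mul0r sub0r !mul0r big1 ?mulr0 ?oppr0 // => e _.
  under eq_bigr do rewrite hfc mulrA.
  by rewrite -mulr_sumr c0 mulr0.
under eq_bigr do rewrite hfc.
rewrite mul1r mul1r mulrBl -mulrA mulr_suml; congr (_ - _ * _).
by apply: eq_bigr => e _; rewrite mulrA.
Qed.

End FrameLaplacian.

Arguments lap_act_lift {R V E src tgt w alpha V0 a' f h}.
Arguments lap_act_copy {R V E src tgt w alpha V0 a' f c h}.

Section FrameSpectrum.
Variables (R : realType) (V E : finType) (src tgt : E -> V) (w alpha : E -> R).
Variables (V0 V1 : {set V}) (a' : nat).
Hypothesis V1V0 : V1 \subset V0.
Local Notation a := a'.+1.
Local Notation FV := (fvert a V0).
Local Notation WF := (fW a V0 V1).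
Local Notation last := (@ord_max a').
Local Notation wk k := (widen_ord (leqnSn a') k).
Local Notation MG W := (dir_lap src tgt w alpha W).
Local Notation MF := (dir_lap (fsrc a V0 src) (ftgt a V0 tgt) (flift a w) (flift a alpha) WF).

Definition lies_over (X : FV) (v : V) : bool := [exists k, X == fv V0 (v, k)].

Definition copy_diff (k : 'I_a') (v : V) (X : FV) : R[i] :=
  (X == fv V0 (v, wk k))%:R - (X == fv V0 (v, last))%:R.

Lemma lies_over_fv t l v : lies_over (fv V0 (t, l)) v = (t == v).
Proof.
apply/existsP/eqP => [[k]|->]; last by exists l.
by rewrite fv_eq => /andP[/eqP].
Qed.

Lemma copy_diff_fv k v t l : v \notin V0 ->
  copy_diff k v (fv V0 (t, l)) = (t == v)%:R * ((l == wk k)%:R - (l == last)%:R).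
Proof.
move=> vV0; rewrite /copy_diff !fv_eq /=.
by case: (t =P v) => [->|_]; rewrite ?(negbTE vV0) ?mul1r ?mul0r ?subrr.
Qed.

Lemma lift_sub_copy_diff u X : u \notin V0 ->
  (lies_over X u)%:R - \sum_k copy_diff k u X = a%:R * (X == fv V0 (u, last))%:R.
Proof.
move=> uV0; case: (fvP X) => [[t l] ->]; rewrite lies_over_fv fv_eq /=.
under eq_bigr do rewrite copy_diff_fv //.
case: (t =P u) => [->|_] /=; last by rewrite big1 ?subr0 ?mulr0 // => k _; rewrite mul0r.
under eq_bigr do rewrite mul1r.
have := sumr_indicator (C := R[i]) l.
rewrite big_ord_recr /= (negbTE uV0) /= sumrB sumr_const card_ord.
under [\sum_(k < a') _]eq_bigr do rewrite eq_sym.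
rewrite [l == last]eq_sym => /(canRL (addrK _)) ->.
ring.
Qed.

Local Notation NF := #|~: WF|.

(* Rows are functions on the frame vertices, on which the Laplacian acts as
   right multiplication by [MF^T]. *)

Definition lift_mx : 'M[R[i]]_(#|~: V1|, NF) :=
  setmx V1 WF (fun v X => (lies_over X v)%:R).
Definition copy_mx (k : 'I_a') : 'M[R[i]]_(#|~: V0|, NF) := setmx V0 WF (copy_diff k).

Lemma lift_mx_lap : lift_mx *m MF^T = (MG V1)^T *m lift_mx.
Proof.
rewrite !dir_lap_setmx !trmx_setmx !mulmx_setmx.
apply: eq_setmx => v X; rewrite !finset.in_setC => vV1 XWF.
case: (fvP X) XWF => [[u j] ->]; rewrite mem_fW => uV1.
have lift_fv t l : (lies_over (fv V0 (t, l)) v)%:R = (t == v)%:R :> R[i].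
  by rewrite lies_over_fv.
have lift_fW X' : X' \in WF -> (lies_over X' v)%:R = 0 :> R[i].
  case: (fvP X') => [[t l] ->]; rewrite mem_fW lies_over_fv => tV1.
  by case: eqP tV1 vV1 => [-> ->|].
under eq_bigr do rewrite mulrC.
rewrite (sum_lap_entry lift_fW) (lap_act_lift lift_fv) lap_act_delta.
under [RHS]eq_bigr do rewrite lies_over_fv.
by rewrite sum_mul_delta finset.in_setC uV1 mul1r.
Qed.

Lemma copy_mx_lap k : copy_mx k *m MF^T = (MG V0)^T *m copy_mx k.
Proof.
rewrite !dir_lap_setmx !trmx_setmx !mulmx_setmx.
apply: eq_setmx => v X; rewrite !finset.in_setC => vV0 XWF.
case: (fvP X) XWF => [[u j] ->] _.
set c := fun l : 'I_a => (l == wk k)%:R - (l == last)%:R : R[i].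
have c0 : \sum_l c l = 0 by rewrite sumrB !sumr_indicator subrr.
have delta_V0 t : t \in V0 -> (t == v)%:R = 0 :> R[i].
  by case: eqP => // -> vV0'; rewrite vV0' in vV0.
have copy_fv t l : copy_diff k v (fv V0 (t, l)) = (t == v)%:R * c l.
  exact: copy_diff_fv.
have copy_fW X' : X' \in WF -> copy_diff k v X' = 0.
  case: (fvP X') => [[t l] ->]; rewrite mem_fW copy_fv => /(fintype.subsetP V1V0) tV0.
  by rewrite delta_V0 ?mul0r.
under eq_bigr do rewrite mulrC.
rewrite (sum_lap_entry copy_fW) (lap_act_copy delta_V0 c0 copy_fv) lap_act_delta.
have copy_at v' : v' \in ~: V0 -> copy_diff k v' (fv V0 (u, j)) = (u == v')%:R * c j.
  by rewrite finset.in_setC; exact: copy_diff_fv.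
under [RHS]eq_bigr => v' v'V0 do rewrite copy_at // mulrA.
by rewrite -mulr_suml sum_mul_delta finset.in_setC.
Qed.

Definition part_size (o : option 'I_a') : nat :=
  if o is Some _ then #|~: V0| else #|~: V1|.

Definition part_mx (o : option 'I_a') : 'M[R[i]]_(part_size o, NF) :=
  if o is Some k then copy_mx k else lift_mx.

Definition part_lap (o : option 'I_a') : 'M[R[i]]_(part_size o) :=
  if o is Some _ then (MG V0)^T else (MG V1)^T.

Lemma part_mx_lap o : part_mx o *m MF^T = part_lap o *m part_mx o.
Proof. by case: o => [k|]; [exact: copy_mx_lap | exact: lift_mx_lap]. Qed.

Lemma part_size_sum : (\sum_o part_size o <= NF)%N.
Proof.
pose D := ({v | v \in ~: V1} + 'I_a' * {v | v \in ~: V0})%type.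
pose pos (d : D) : V * 'I_a :=
  match d with inl v => (val v, last) | inr (k, v) => (val v, wk k) end.
have notV0 (v : {v | v \in ~: V0}) : (val v \in V0) = false.
  by apply/negbTE; have := valP v; rewrite inE.
have wk_last k : (wk k == last) = false by rewrite -val_eqE /= ltn_eqF.
have pos_inj : injective (fun d => fv V0 (pos d)).
  case=> [v|[k v]] [v'|[k' v']] /eqP; rewrite fv_eq /= => /andP[/eqP eq_v].
  - by move=> _; congr inl; exact: val_inj.
  - by rewrite eq_v notV0 eq_sym wk_last.
  - by rewrite notV0 wk_last.
  - rewrite notV0 /= -val_eqE /= => /eqP/val_inj ->.
    by congr (inr (_, _)); exact: val_inj.
have pos_WF : [set fv V0 (pos d) | d : D] \subset ~: WF.
  apply/fintype.subsetP => _ /imsetP[[v|[k v]] _ ->];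
    rewrite finset.in_setC mem_fW; have := valP v; rewrite inE //.
  by apply: contra; exact: (fintype.subsetP V1V0).
rewrite big_option /= sum_nat_const card_ord.
move: (subset_leq_card pos_WF); rewrite card_imset //.
by rewrite card_sum card_prod card_ord !card_sig.
Qed.

Local Notation span := (\sum_o <<part_mx o>>)%MS.
Local Notation indicator X0 := (fun X : FV => (X == X0)%:R : R[i]).

Lemma lift_row_sub u : u \notin V1 -> (rowfun WF (fun X => (lies_over X u)%:R) <= span)%MS.
Proof.
rewrite -finset.in_setC => uV1.
apply: submx_trans (rowfun_sub_setmx WF (fun v X => (lies_over X v)%:R) uV1) _.
by rewrite (sumsmx_sup None) ?genmxE.
Qed.

Lemma copy_row_sub k u : u \notin V0 -> (rowfun WF (copy_diff k u) <= span)%MS.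
Proof.
rewrite -finset.in_setC => uV0.
apply: submx_trans (rowfun_sub_setmx WF (copy_diff k) uV0) _.
by rewrite (sumsmx_sup (Some k)) ?genmxE.
Qed.

Lemma last_row_sub u : u \notin V0 -> (rowfun WF (indicator (fv V0 (u, last))) <= span)%MS.
Proof.
move=> uV0; have uV1 : u \notin V1 by apply: contra uV0; exact: (fintype.subsetP V1V0).
have -> : rowfun WF (indicator (fv V0 (u, last))) = a%:R^-1 *:
    (rowfun WF (fun X => (lies_over X u)%:R) - \sum_k rowfun WF (copy_diff k u)).
  apply/rowP => y; rewrite !mxE summxE; under eq_bigr do rewrite mxE.
  by rewrite lift_sub_copy_diff // mulKf ?pnatr_eq0.
apply/scalemx_sub/addmx_sub; first exact: lift_row_sub.
by rewrite eqmx_opp; apply: summx_sub => k _; exact: copy_row_sub.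
Qed.

Lemma part_mx_span : (1%:M <= span)%MS.
Proof.
apply/row_subP => y; rewrite row1 delta_rowfun.
have := enum_valP y; rewrite finset.in_setC.
case: (fvP (enum_val y)) => [[u j] ->]; rewrite mem_fW => uV1.
have [uV0 | uV0] := boolP (u \in V0).
  have -> : rowfun WF (indicator (fv V0 (u, j))) = rowfun WF (fun X => (lies_over X u)%:R).
    apply/rowP => y'; rewrite !mxE; case: (fvP (enum_val y')) => [[t l] ->].
    by rewrite lies_over_fv fv_eq /=; case: eqP => // ->; rewrite uV0.
  exact: lift_row_sub.
have [j_lt | j_ge] := ltnP j a'.
  have -> : j = wk (Ordinal j_lt) by exact: val_inj.
  have -> : rowfun WF (indicator (fv V0 (u, wk (Ordinal j_lt)))) =
      rowfun WF (copy_diff (Ordinal j_lt) u) + rowfun WF (indicator (fv V0 (u, last))).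
    by apply/rowP => y'; rewrite !mxE subrK.
  by apply: addmx_sub; [exact: copy_row_sub | exact: last_row_sub].
have -> : j = last by apply/val_inj/eqP; rewrite eqn_leq j_ge -ltnS ltn_ord.
exact: last_row_sub.
Qed.

Lemma spec_mult_frame (lambda : R[i]) :
  spec_mult (fsrc a V0 src) (ftgt a V0 tgt) (flift a w) (flift a alpha) WF lambda =
  (spec_mult src tgt w alpha V1 lambda + a' * spec_mult src tgt w alpha V0 lambda)%N.
Proof.
(* MathComp eigenspaces are row kernels, hence the transposes. *)
have tr_shift n (M : 'M[R[i]]_n) : (M - lambda%:M)^T = M^T - lambda%:M.
  by rewrite linearB /= tr_scalar_mx.
have part_shift o := intertwine_shift lambda (part_mx_lap o).
have := mxrank_ker_intertwined part_shift part_mx_span part_size_sum.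
rewrite big_option /= sum_nat_const card_ord.
rewrite -!tr_shift (mxrank_ker_tr (MF - _)) (mxrank_ker_tr (MG V1 - _)).
rewrite (mxrank_ker_tr (MG V0 - _)).
by rewrite /spec_mult /eigenspace => ->.
Qed.

End FrameSpectrum.

Theorem proposition4p5 (R : realType) (V E : finType)
  (src tgt : E -> V) (inv : E -> E) (w : E -> R) (alpha : E -> R)
  (V0 V1 : {set V}) (a : nat) :
  is_magnetic src tgt inv w alpha ->
  V1 \subset V0 -> (1 <= a)%N ->
  forall lambda : R[i],
    spec_mult (fsrc a V0 src) (ftgt a V0 tgt) (flift a w) (flift a alpha)
      (fW a V0 V1) lambda
    = (spec_mult src tgt w alpha V1 lambda
       + (a - 1) * spec_mult src tgt w alpha V0 lambda)%N.
Proof.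
move=> _ V1V0; case: a => [//|a'] _ lambda.
by rewrite subn1; exact: spec_mult_frame.
Qed.
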